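(* Let $\mathcal T$ be a complete binary tree and let $\mathcal A,\mathcal B,\mathcal C\subseteq\mathcal V(\mathcal T)$. Then $\mathrm{desc}(\mathcal A)\subseteq\mathrm{desc}\big((\mathcal A\cup\mathcal B)\setminus\mathrm{desc}(\mathcal C)\big)\cup\mathrm{desc}\big(\mathcal C\setminus\overline{\mathrm{desc}}(\mathcal B)\big)$.
   Context: $\mathcal V(\mathcal T)$ is the vertex set of the complete binary tree (nodes are binary strings, root is the empty string, children of $u$ are $u0,u1$). For a node $u$, $\mathrm{desc}(u)$ is the set of descendants of $u$ including $u$, and $\overline{\mathrm{desc}}(u)$ the set of descendants of $u$ excluding $u$; for a set $\mathcal U$ of nodes, $\mathrm{desc}(\mathcal U)=\bigcup_{u\in\mathcal U}\mathrm{desc}(u)$ and $\overline{\mathrm{desc}}(\mathcal U)=\bigcup_{u\in\mathcal U}\overline{\mathrm{desc}}(u)$. *)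

From mathcomp Require Import all_boot.
From mathcomp Require Import boolp classical_sets.
Set Implicit Arguments. Unset Strict Implicit. Unset Printing Implicit Defensive.
Local Open Scope classical_set_scope.

(* Vertices of the (infinite) complete binary tree: finite binary strings.
   The root is [::]; the children of u are u ++ [:: false] and u ++ [:: true]. *)
Definition node := seq bool.

Definition desc (u : node) : set node := [set v | prefix u v].

Definition sdesc (u : node) : set node := [set v | prefix u v /\ v <> u].

Definition descS (U : set node) : set node := \bigcup_(u in U) desc u.
Definition sdescS (U : set node) : set node := \bigcup_(u in U) sdesc u.

From mathcomp Require Import all_boot.
From mathcomp Require Import boolp classical_sets.

Set Implicit Arguments.
Unset Strict Implicit.
Unset Printing Implicit Defensive.
Local Open Scope classical_set_scope.

(* Let v descend from a in A. If a is not below C, a itself witnesses the first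
   set. Otherwise walk up from an ancestor c in C of v: either c has no strict
   ancestor in B (so c witnesses the second set), or it has one, b, which is
   either not below C (and witnesses the first set) or lies below some c' in C
   strictly shallower than c. Induction on the depth of c ends the walk. *)

Lemma sdesc_size_lt (u v : node) : sdesc u v -> size u < size v.
Proof.
move=> [uv neq_vu]; rewrite ltnNge; apply/negP => le_vu.
by apply: neq_vu; move: uv; rewrite prefixE take_oversize => // /eqP.
Qed.

Section Proposition2p3.

Variables A B C : set node.

Let cover := descS ((A `|` B) `\` descS C) `|` descS (C `\` sdescS B).

Lemma cover_of_C_ancestor (c v : node) : C c -> prefix c v -> cover v.
Proof.
have [n] := ubnP (size c); elim: n c => // n IHn c lt_cn Cc cv.
have [[b Bb sdesc_bc]|notB] := pselect (sdescS B c); last by right; exists c.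
have bv : prefix b v by case: sdesc_bc => bc _; apply: prefix_trans bc cv.
have [[c' Cc' c'b]|notC] := pselect (descS C b); last by left; exists b => //; split; [right|].
apply: (IHn c') => //; last exact: prefix_trans c'b bv.
by rewrite (leq_ltn_trans (size_prefix c'b)) // (leq_trans (sdesc_size_lt sdesc_bc)).
Qed.

End Proposition2p3.

Theorem proposition2p3 (A B C : set node) :
  descS A `<=` descS ((A `|` B) `\` descS C) `|` descS (C `\` sdescS B).
Proof.
move=> v [a Aa av].
have [[c Cc ca]|notC] := pselect (descS C a); last by left; exists a => //; split; [left|].
exact: cover_of_C_ancestor Cc (prefix_trans ca av).
Qed.
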